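(* Let $n$ be such that $n/2$ is odd, let $\Omega\subseteq\mathbb{R}^n$ be open, let $\underline{f}$ be a vector-valued function on $\Omega$ and $\lambda\in\mathbb{C}$. With $A=M^{ie_N}\partial_{\underline{x}}^{-\underline{f}}$ and $B=M^{ie_N}\partial_{\underline{x}}^{\underline{f}}$ acting on $\mathbb{C}_n$-valued functions on $\Omega$, one has (i) $\ker(A\pm\lambda)=\ker\left(\partial_{\underline{x}}-M^{\underline{f}\mp\lambda ie_N}\right)$; (ii) $\ker(B\pm\lambda)=\ker\left(\partial_{\underline{x}}+M^{\underline{f}\pm\lambda ie_N}\right)$.
   Context: $\mathbb{R}_{0,n}$ is the real Clifford algebra generated by an orthonormal basis $e_1,\dots,e_n$ of $\mathbb{R}^n$ with relations $e_je_k+e_ke_j=-2\delta_{jk}$; $\mathbb{C}_n=\mathbb{R}_{0,n}\otimes\mathbb{C}$, with $i$ the complex unit. $e_N=e_1e_2\cdots e_n$ is the pseudo-scalar. The Dirac operator is $\partial_{\underline{x}}=\sum_{j=1}^n e_j\partial_{x_j}$, acting from the left. For a function $f$, $M^f$ is right multiplication: $M^fg=gf$; $\partial_{\underline{x}}^{\pm f}=\partial_{\underline{x}}\pm M^f$. *)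

From HB Require Import structures.
From mathcomp Require Import all_boot all_order all_algebra.
From mathcomp Require Import all_classical all_reals all_analysis.
From mathcomp Require complex.
Import complex.ComplexField.
Set Implicit Arguments. Unset Strict Implicit. Unset Printing Implicit Defensive.
Import Order.TTheory GRing.Theory Num.Theory.
Import numFieldNormedType.Exports.
Local Open Scope ring_scope.

Section Clifford.
Variables (R : realType) (n : nat).

Definition Cx := complex.complex R.

(* The complex Clifford algebra C_n = R_{0,n} (x) C, in the standard blade
   basis e_A (A a subset of {0..n-1}, e_A = e_{a1}...e_{ak}, a1<...<ak):
   an element is the family of its complex coordinates. *)
Definition Cl := {ffun {set 'I_n} -> Cx}.

Definition blade (A : {set 'I_n}) : Cl := [ffun B => ((B == A)%:R : Cx)].

(* e_A e_B = csign A B e_{A Δ B}, using e_j e_k = - e_k e_j (j<>k), e_j^2 = -1 *)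
Definition csign (A B : {set 'I_n}) : Cx :=
  (-1) ^+ (#|[set p : ('I_n * 'I_n)%type | (p.1 \in A) && (p.2 \in B) && (p.2 < p.1)%N]|
           + #|A :&: B|).

Definition cmul (a b : Cl) : Cl :=
  \sum_(A : {set 'I_n}) \sum_(B : {set 'I_n})
     (csign A B * a A * b B) *: blade ((A :\: B) :|: (B :\: A)).

(* e_j (0-indexed) and the pseudo-scalar e_N = e_1 ... e_n *)
Definition gen (j : 'I_n) : Cl := blade [set j].
Definition eN : Cl := blade [set: 'I_n]%SET.
Definition iC : Cx := complex.Complex 0 1.
Definition ieN : Cl := iC *: eN.

Definition vec (v : 'rV[R]_n) : Cl :=
  \sum_(j < n) (complex.Complex (v 0 j) 0) *: gen j.

Definition Cfun := 'rV[R]_n -> Cl.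

Definition ReC (z : Cx) : R := complex.Re z.
Definition ImC (z : Cx) : R := complex.Im z.

Definition partial (j : 'I_n) (g : Cfun) (x : 'rV[R]_n) : Cl :=
  [ffun A => complex.Complex
     ('D_(delta_mx 0 j) (fun y => ReC (g y A)) x)
     ('D_(delta_mx 0 j) (fun y => ImC (g y A)) x)].

Definition diracOp (g : Cfun) : Cfun :=
  fun x => \sum_(j < n) cmul (gen j) (partial j g x).

Definition rmul (F : Cfun) (g : Cfun) : Cfun := fun x => cmul (g x) (F x).

Definition domain (Omega : set 'rV[R]_n) (g : Cfun) : Prop :=
  forall x, Omega x -> forall A : {set 'I_n},
    differentiable (fun y => ReC (g y A)) x /\
    differentiable (fun y => ImC (g y A)) x.

Definition kerOp (Omega : set 'rV[R]_n) (T : Cfun -> Cfun) : set Cfun :=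
  [set g | domain Omega g /\ forall x, Omega x -> T g x = 0].

Definition addOp (T S : Cfun -> Cfun) : Cfun -> Cfun := fun g x => T g x + S g x.
Definition subOp (T S : Cfun -> Cfun) : Cfun -> Cfun := fun g x => T g x - S g x.
Definition scalOp (l : Cx) : Cfun -> Cfun := fun g x => l *: g x.

Definition vecF (f : 'rV[R]_n -> 'rV[R]_n) : Cfun := fun x => vec (f x).
Definition ieNF : Cfun := fun _ => ieN.
Definition addF (F G : Cfun) : Cfun := fun x => F x + G x.
Definition subF (F G : Cfun) : Cfun := fun x => F x - G x.
Definition scalF (l : Cx) (F : Cfun) : Cfun := fun x => l *: F x.

Definition opA (f : 'rV[R]_n -> 'rV[R]_n) : Cfun -> Cfun :=
  fun g => rmul ieNF (subOp diracOp (rmul (vecF f)) g).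
Definition opB (f : 'rV[R]_n -> 'rV[R]_n) : Cfun -> Cfun :=
  fun g => rmul ieNF (addOp diracOp (rmul (vecF f)) g).

End Clifford.

(* Right multiplication by i e_N is an involution: e_N^2 = (-1)^(n(n+1)/2), which
   is -1 exactly when n/2 is odd, so (i e_N)^2 = 1.  Multiplying an equation
   (d - M^f) g +- lam g = 0 on the right by i e_N therefore turns A g +- lam g = 0
   into (d - M^f) g +- lam g (i e_N) = 0, and conversely; the same for B. *)
From Pilot Require Import Defs.
From HB Require Import structures.
From mathcomp Require Import all_boot all_order all_algebra.
From mathcomp Require Import all_classical all_reals all_analysis.
From mathcomp Require complex.
Import complex.ComplexField.
Import Order.TTheory GRing.Theory Num.Theory.
Import numFieldNormedType.Exports.
Local Open Scope ring_scope.

Lemma odd_bin2_addn (n : nat) : ~~ odd n -> odd n./2 -> odd ('C(n, 2) + n).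
Proof.
move=> n_even half_odd; have := odd_double_half n; rewrite (negbTE n_even) add0n.
move: half_odd; set m := n./2 => m_odd <-.
rewrite bin2 -mul2n -mulnA mul2n doubleK oddD oddM m_odd /=.
by case: m m_odd => // m _; rewrite mulnS /= oddM.
Qed.

Section CliffordProduct.
Variables (R : realType) (n : nat).
Implicit Types (a b c : Cl R n) (k : Cx R).

Lemma cmulDl a b c : cmul (a + b) c = cmul a c + cmul b c.
Proof.
rewrite /cmul -big_split; apply: eq_bigr => A _.
rewrite -big_split; apply: eq_bigr => B _ /=.
by rewrite ffunE mulrDr mulrDl scalerDl.
Qed.

Lemma cmulDr a b c : cmul a (b + c) = cmul a b + cmul a c.
Proof.
rewrite /cmul -big_split; apply: eq_bigr => A _.
rewrite -big_split; apply: eq_bigr => B _ /=.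
by rewrite ffunE mulrDr scalerDl.
Qed.

Lemma cmulZl k a b : cmul (k *: a) b = k *: cmul a b.
Proof.
rewrite /cmul scaler_sumr; apply: eq_bigr => A _.
rewrite scaler_sumr; apply: eq_bigr => B _ /=.
by rewrite ffunE scalerA; congr (_ *: _); rewrite mulrCA !mulrA.
Qed.

Lemma cmulZr k a b : cmul a (k *: b) = k *: cmul a b.
Proof.
rewrite /cmul scaler_sumr; apply: eq_bigr => A _.
rewrite scaler_sumr; apply: eq_bigr => B _ /=.
by rewrite ffunE scalerA; congr (_ *: _); rewrite mulrCA !mulrA.
Qed.

Lemma cmul0l b : cmul 0 b = 0.
Proof. by have := cmulZl 0 0 b; rewrite !scale0r. Qed.

Lemma cmulBr a b c : cmul a (b - c) = cmul a b - cmul a c.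
Proof. by rewrite cmulDr -scaleN1r cmulZr scaleN1r. Qed.

Lemma cmul_eN_coord a (C : {set 'I_n}) :
  cmul a (eN R n) C = csign R (~: C) [set: 'I_n] * a (~: C).
Proof.
rewrite /cmul sum_ffunE (bigD1 (~: C)) //= [X in _ + X]big1 ?addr0.
  rewrite sum_ffunE (bigD1 [set: 'I_n]%SET) //= big1 ?addr0.
    rewrite !ffunE eqxx mulr1 finset.setDT finset.set0U finset.setTD.
    by rewrite finset.setCK eqxx scaler1.
  by move=> B /negbTE nTB; rewrite !ffunE nTB mulr0 scale0r.
move=> A nCA; rewrite sum_ffunE big1 // => B _.
rewrite !ffunE; case: eqP => [->|]; last by rewrite mulr0 scale0r.
rewrite finset.setDT finset.set0U finset.setTD.
case: eqP => [eC|]; last by rewrite scaler0.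
by move: nCA; rewrite eC finset.setCK eqxx.
Qed.

Lemma card_inversions_setT (A : {set 'I_n}) :
  #|[set p : ('I_n * 'I_n)%type |
      (p.1 \in A) && (p.2 \in [set: 'I_n]%SET) && (p.2 < p.1)%N]|
  = (\sum_(i in A) (i : nat))%N.
Proof.
rewrite cardsE -sum1_card.
transitivity (\sum_(i in A) \sum_(j | (j \in [set: 'I_n]%SET) && (j < i)%N) 1)%N.
  rewrite pair_big_dep /=; apply: eq_bigl => -[i j] /=.
  by rewrite -topredE /= andbA.
apply: eq_bigr => i _; under eq_bigl do rewrite finset.in_setT /=.
rewrite -(big_ord_widen_cond n xpredT (fun _ => 1%N) (ltnW (ltn_ord i))).
by rewrite sum1_card card_ord.
Qed.

Lemma csign_setT (A : {set 'I_n}) :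
  csign R A [set: 'I_n] = (-1) ^+ (\sum_(i in A) (i : nat) + #|A|)%N.
Proof. by rewrite /csign finset.setIT card_inversions_setT. Qed.

Section HalfOdd.
Hypotheses (n_even : ~~ odd n) (half_odd : odd n./2).

(* The two exponents add up to 'C(n, 2) + n, whatever the split of 'I_n. *)
Lemma csign_setC_setT (C : {set 'I_n}) :
  csign R (~: C) [set: 'I_n] * csign R C [set: 'I_n] = -1.
Proof.
rewrite !csign_setT -exprD addnACA [(#|~: C| + _)%N]addnC finset.cardsC card_ord.
have -> : (\sum_(i in ~: C) (i : nat) + \sum_(i in C) (i : nat))%N
          = (\sum_(i < n) (i : nat))%N.
  rewrite addnC [RHS](bigID (mem C)) /=; congr addn.
  by apply: eq_bigl => i; rewrite finset.in_setC.
by rewrite -(big_mkord xpredT id) bin2_sum -signr_odd odd_bin2_addn.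
Qed.

Lemma cmul_eNK a : cmul (cmul a (eN R n)) (eN R n) = - a.
Proof.
apply/ffunP => C.
by rewrite !cmul_eN_coord finset.setCK mulrA csign_setC_setT ffunE mulN1r.
Qed.

Lemma cmul_ieNK a : cmul (cmul a (ieN R n)) (ieN R n) = a.
Proof.
rewrite /ieN !cmulZr cmulZl scalerA cmul_eNK scalerN -expr2.
by rewrite [iC R ^+ 2]complex.sqr_i scaleN1r opprK.
Qed.

Lemma cmul_ieN_eq0 (u v : Cl R n) k :
  (cmul u (ieN R n) + k *: v = 0) <-> (u + k *: cmul v (ieN R n) = 0).
Proof.
by split=> /(congr1 (fun z => cmul z (ieN R n)));
  rewrite cmul0l cmulDl cmulZl cmul_ieNK.
Qed.

End HalfOdd.
End CliffordProduct.

Lemma kerOp_ext (R : realType) (n : nat) (Omega : set 'rV[R]_n)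
    (T S : Cfun R n -> Cfun R n) :
  (forall g x, T g x = 0 <-> S g x = 0) -> kerOp Omega T = kerOp Omega S.
Proof.
move=> TS; apply: funext => g; apply: propext.
by split=> -[dom_g ker_g]; split=> // x /ker_g /TS.
Qed.

Theorem lemma7p1 (R : realType) (n : nat) (hn_even : ~~ odd n)
  (hn_half : odd n./2) (Omega : set 'rV[R]_n) (hOmega : open Omega)
  (f : 'rV[R]_n -> 'rV[R]_n) (lam : Defs.Cx R) :
  (* (i) *)
  (kerOp Omega (addOp (opA f) (scalOp lam))
     = kerOp Omega (subOp (@diracOp R n) (rmul (subF (vecF f) (scalF lam (@ieNF R n)))))
   /\ kerOp Omega (subOp (opA f) (scalOp lam))
     = kerOp Omega (subOp (@diracOp R n) (rmul (addF (vecF f) (scalF lam (@ieNF R n))))))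
  /\
  (* (ii) *)
  (kerOp Omega (addOp (opB f) (scalOp lam))
     = kerOp Omega (addOp (@diracOp R n) (rmul (addF (vecF f) (scalF lam (@ieNF R n)))))
   /\ kerOp Omega (subOp (opB f) (scalOp lam))
     = kerOp Omega (addOp (@diracOp R n) (rmul (subF (vecF f) (scalF lam (@ieNF R n)))))).
Proof.
have eq0 := @cmul_ieN_eq0 R n hn_even hn_half.
split; split; apply: kerOp_ext => g x;
  rewrite /opA /opB /addOp /subOp /rmul /scalOp /subF /addF /scalF /ieNF /vecF.
- by rewrite eq0 cmulBr cmulZr opprD opprK addrA.
- by rewrite -scaleNr eq0 cmulDr cmulZr scaleNr opprD addrA.
- by rewrite eq0 cmulDr cmulZr addrA.
- by rewrite -scaleNr eq0 cmulBr cmulZr scaleNr addrA.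
Qed.
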